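(* Let $(X,d,\kappa)$ be a complete digital metric space, and assume either that $X$ is finite or that $d$ is an $\ell_p$ metric for some $1\le p\le\infty$. Let $T:X\to X$ be a bijective generalized $\alpha$-$\psi$-expansive mapping (with associated $\alpha:X\times X\to[0,\infty)$ and $\psi\in\Psi$) such that (1) $T^{-1}$ is $\alpha$-admissible, and (2) there exists $x_0\in X$ such that $\alpha(x_0,T^{-1}(x_0))\ge 1$. Then $T$ has a fixed point.
   Context: A digital metric space is a triple $(X,d,\kappa)$ where $X\subset\mathbb{Z}^n$ for some positive integer $n$, $\kappa$ is an adjacency relation on $X$, and $d$ is a metric on $X$. The $\ell_p$ metric on $\mathbb{Z}^n$ is $d(x,y)=(\sum_i|x_i-y_i|^p)^{1/p}$ for $1\le p<\infty$ and $\max_i|x_i-y_i|$ for $p=\infty$. $\Psi$ is the set of nondecreasing functions $\psi:[0,\infty)\to[0,\infty)$ with $\sum_{n=1}^\infty\psi^n(t)<\infty$ for all $t>0$ ($\psi^n$ the $n$-fold composition). A map $R:X\to X$ is $\alpha$-admissible (for $\alpha:X\times X\to[0,\infty)$) if $\alpha(x,y)\ge1$ implies $\alpha(R(x),R(y))\ge1$. $T$ is a generalized $\alpha$-$\psi$-expansive mapping if there exist $\alpha:X\times X\to[0,\infty)$ and $\psi\in\Psi$ such that for all $x,y\in X$, $\psi(d(T(x),T(y)))\ge\alpha(x,y)M(x,y)$, where $M(x,y)=\max\{d(x,y),\ \tfrac{d(x,T(x))+d(y,T(y))}{2},\ \tfrac{d(x,T(y))+d(y,T(x))}{2}\}$.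 *)

From HB Require Import structures.
From mathcomp Require Import all_boot all_order all_algebra.
From mathcomp Require Import all_classical all_reals all_analysis.
Set Implicit Arguments. Unset Strict Implicit. Unset Printing Implicit Defensive.
Import Order.TTheory GRing.Theory Num.Theory.
Import numFieldNormedType.Exports.
Local Open Scope classical_set_scope.
Local Open Scope ring_scope.

Definition pt (n : nat) := 'rV[int]_n.

Definition is_metric_on (R : realType) (n : nat) (X : set (pt n))
  (d : pt n -> pt n -> R) : Prop :=
  [/\ (forall x y, X x -> X y -> 0 <= d x y),
      (forall x y, X x -> X y -> (d x y = 0 <-> x = y)),
      (forall x y, X x -> X y -> d x y = d y x) &
      (forall x y z, X x -> X y -> X z -> d x z <= d x y + d y z)].

Definition d_cauchy (R : realType) (n : nat) (d : pt n -> pt n -> R)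
  (u : nat -> pt n) : Prop :=
  forall eps : R, 0 < eps -> exists N : nat,
    forall m k : nat, (N <= m)%N -> (N <= k)%N -> d (u m) (u k) < eps.

Definition d_converges (R : realType) (n : nat) (d : pt n -> pt n -> R)
  (u : nat -> pt n) (l : pt n) : Prop :=
  forall eps : R, 0 < eps -> exists N : nat,
    forall m : nat, (N <= m)%N -> d (u m) l < eps.

Definition complete_on (R : realType) (n : nat) (X : set (pt n))
  (d : pt n -> pt n -> R) : Prop :=
  forall u : nat -> pt n, (forall m, X (u m)) -> d_cauchy d u ->
    exists2 l, X l & d_converges d u l.

Definition lp_dist (R : realType) (n : nat) (p : \bar R) (x y : pt n) : R :=
  match p with
  | EFin r => (\sum_(i < n) (`|x ord0 i - y ord0 i|%:~R : R) `^ r) `^ r^-1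
  | _ => \big[Num.max/0]_(i < n) (`|x ord0 i - y ord0 i|%:~R : R)
  end.

Definition in_Psi (R : realType) (psi : R -> R) : Prop :=
  [/\ (forall t, 0 <= t -> 0 <= psi t),
      (forall s t, 0 <= s -> s <= t -> psi s <= psi t) &
      (forall t, 0 < t -> cvgn (series (fun k : nat => iter k.+1 psi t)))].

Definition alpha_admissible (R : realType) (n : nat) (X : set (pt n))
  (alpha : pt n -> pt n -> R) (S : pt n -> pt n) : Prop :=
  forall x y, X x -> X y -> 1 <= alpha x y -> 1 <= alpha (S x) (S y).

Definition Mxy (R : realType) (n : nat) (d : pt n -> pt n -> R)
  (T : pt n -> pt n) (x y : pt n) : R :=
  Num.max (d x y) (Num.max ((d x (T x) + d y (T y)) / 2)
                           ((d x (T y) + d y (T x)) / 2)).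

Definition gen_alpha_psi_expansive (R : realType) (n : nat) (X : set (pt n))
  (d : pt n -> pt n -> R) (T : pt n -> pt n)
  (alpha : pt n -> pt n -> R) (psi : R -> R) : Prop :=
  [/\ (forall x y, X x -> X y -> 0 <= alpha x y),
      in_Psi psi &
      (forall x y, X x -> X y -> alpha x y * Mxy d T x y <= psi (d (T x) (T y)))].

From HB Require Import structures.
From mathcomp Require Import all_boot all_order all_algebra.
From mathcomp Require Import all_classical all_reals all_analysis.
From mathcomp Require Import lra.
Import Order.TTheory GRing.Theory Num.Theory.
Import numFieldNormedType.Exports.
Local Open Scope classical_set_scope.
Local Open Scope ring_scope.
Set Implicit Arguments. Unset Strict Implicit.

(* Both alternatives on (X, d) make the space uniformly discrete: distinct
   points are at least some delta > 0 apart (for an l_p metric on Z^n, delta = 1).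
   Expansivity of T turns into psi-contractivity of T^-1 along pairs related by
   alpha, and admissibility propagates alpha >= 1 along the orbit
   x_k = T^-k x_0, so d(x_k, x_k+1) <= psi^k(d(x_0, x_1)).  Summability of the
   iterates of psi forces these steps below delta, hence x_k = x_k+1 for some k,
   i.e. x_k is a fixed point of T^-1 and therefore of T. *)

Definition uniformly_discrete (R : realType) (n : nat) (X : set (pt n))
    (d : pt n -> pt n -> R) : Prop :=
  exists2 delta : R, 0 < delta &
    forall x y, X x -> X y -> d x y < delta -> x = y.

Lemma finite_metric_uniformly_discrete (R : realType) (n : nat)
    (X : set (pt n)) (d : pt n -> pt n -> R) :
  is_metric_on X d -> finite_set X -> uniformly_discrete X d.
Proof.
move=> [d_ge0 d_eq0 _ _] /finite_seqP[s Xs].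
have d_gt0 x y : X x -> X y -> x != y -> 0 < d x y.
  move=> Xx Xy xy; rewrite lt_neqAle d_ge0 // andbT eq_sym.
  by apply: contra xy => /eqP/(d_eq0 _ _ Xx Xy)->.
exists (\big[Num.min/1]_(x <- s)
          \big[Num.min/1]_(y <- s | (x \in s) && (y \in s) && (x != y)) d x y).
  apply: lt_bigmin => // x _; apply: lt_bigmin => // y /andP[/andP[xs ys] xy].
  by apply: d_gt0 => //; rewrite Xs.
move=> x y Xx Xy; apply: contraTeq => xy; rewrite -leNgt.
have xs : x \in s by move: Xx; rewrite Xs.
have ys : y \in s by move: Xy; rewrite Xs.
apply: le_trans (ge_bigmin_seq 1 x xpredT _ xs isT) _.
by apply: (ge_bigmin_seq 1 y) => //; rewrite xs ys xy.
Qed.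

Lemma lp_dist_ge1 (R : realType) (n : nat) (p : \bar R) (x y : pt n) :
  (1 <= p)%E -> x <> y -> 1 <= lp_dist p x y.
Proof.
move=> p_ge1 xy.
have [i xy_i] : exists i, x ord0 i != y ord0 i.
  apply: contrapT => xy_eq; apply: xy; apply/matrixP => a b.
  rewrite (ord1 a); apply/eqP/negPn/negP => xy_b; apply: xy_eq; by exists b.
have coord_ge1 : 1 <= (`|x ord0 i - y ord0 i|%:~R : R).
  by rewrite ler1z -gtz0_ge1 normr_gt0 subr_eq0.
case: p p_ge1 => [r| |] //= p_ge1.
- rewrite lee_fin in p_ge1.
  have sum_ge1 : 1 <= \sum_(j < n) (`|x ord0 j - y ord0 j|%:~R : R) `^ r.
    rewrite (bigD1 i) //=.
    have term_ge1 : 1 <= (`|x ord0 i - y ord0 i|%:~R : R) `^ r.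
      by have := ler_powR coord_ge1 (ltW (lt_le_trans ltr01 p_ge1)); rewrite powRr0.
    have rest_ge0 :
        0 <= \sum_(j < n | j != i) (`|x ord0 j - y ord0 j|%:~R : R) `^ r.
      by apply: sumr_ge0 => j _; apply: powR_ge0.
    lra.
  have r_inv_ge0 : 0 <= r^-1 by rewrite invr_ge0; lra.
  by have := ler_powR sum_ge1 r_inv_ge0; rewrite powRr0.
- apply: le_trans coord_ge1 _.
  exact: (le_bigmax 0 (fun j : 'I_n => (`|x ord0 j - y ord0 j|%:~R : R)) i).
Qed.

Lemma lp_uniformly_discrete (R : realType) (n : nat) (X : set (pt n))
    (d : pt n -> pt n -> R) (p : \bar R) :
  (1 <= p)%E -> (forall x y, X x -> X y -> d x y = lp_dist p x y) ->
  uniformly_discrete X d.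
Proof.
move=> p_ge1 d_lp; exists 1 => // x y Xx Xy; rewrite d_lp //.
by apply: contraTeq => /eqP xy; rewrite -leNgt; apply: lp_dist_ge1.
Qed.

Lemma Psi_iter_small (R : realType) (psi : R -> R) (t e : R) :
  in_Psi psi -> 0 < t -> 0 < e -> exists k, iter k.+1 psi t < e.
Proof.
move=> [psi_ge0 _ psi_sum] t_gt0 e_gt0.
have [N _ tail_small] :=
  cvgr0_norm_lt _ (cvg_series_cvg_0 (psi_sum t t_gt0)) _ e_gt0.
exists N; apply: le_lt_trans (tail_small N (leqnn N)).
exact: ler_norm.
Qed.

Section InverseOrbit.

Variables (R : realType) (n : nat) (X : set (pt n)) (d : pt n -> pt n -> R).
Variables (T Tinv : pt n -> pt n) (alpha : pt n -> pt n -> R) (psi : R -> R).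

Hypothesis d_ge0 : forall x y, X x -> X y -> 0 <= d x y.
Hypothesis XTinv : forall x, X x -> X (Tinv x).
Hypothesis TinvK : forall x, X x -> T (Tinv x) = x.
Hypothesis T_expansive : gen_alpha_psi_expansive X d T alpha psi.

Lemma inverse_psi_contractive u v : X u -> X v ->
  1 <= alpha (Tinv u) (Tinv v) -> d (Tinv u) (Tinv v) <= psi (d u v).
Proof.
move=> Xu Xv alpha_ge1; have [_ _ expand] := T_expansive.
have := expand _ _ (XTinv Xu) (XTinv Xv); rewrite !TinvK //.
have d_le_M : d (Tinv u) (Tinv v) <= Mxy d T (Tinv u) (Tinv v).
  by rewrite /Mxy le_max lexx.
have := d_ge0 (XTinv Xu) (XTinv Xv).
nra.
Qed.

Variable x0 : pt n.
Hypothesis Xx0 : X x0.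
Hypothesis alpha_x0 : 1 <= alpha x0 (Tinv x0).
Hypothesis Tinv_admissible : alpha_admissible X alpha Tinv.

Lemma inverse_orbit_in k : X (iter k Tinv x0).
Proof. by elim: k => [|k IHk] //=; apply: XTinv. Qed.

Lemma inverse_orbit_alpha k :
  1 <= alpha (iter k Tinv x0) (iter k.+1 Tinv x0).
Proof.
elim: k => [|k IHk] //.
exact: Tinv_admissible (inverse_orbit_in k) (inverse_orbit_in k.+1) IHk.
Qed.

Lemma inverse_orbit_step_le k :
  d (iter k Tinv x0) (iter k.+1 Tinv x0) <= iter k psi (d x0 (Tinv x0)).
Proof.
have [_ [_ psi_mono _] _] := T_expansive.
elim: k => [|k IHk] //=.
apply: le_trans (inverse_psi_contractive (inverse_orbit_in k)
  (inverse_orbit_in k.+1) (inverse_orbit_alpha k.+1)) _.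
by apply: psi_mono => //; apply: d_ge0; apply: inverse_orbit_in.
Qed.

Lemma inverse_orbit_steps_small e : 0 < e ->
  exists k, d (iter k Tinv x0) (iter k.+1 Tinv x0) < e.
Proof.
move=> e_gt0; have [_ Psi_psi _] := T_expansive.
have := d_ge0 Xx0 (XTinv Xx0); rewrite le_eqVlt => /predU1P[t_eq0|t_gt0].
  by exists 0%N; rewrite /= -t_eq0.
have [k psi_small] := Psi_iter_small Psi_psi t_gt0 e_gt0.
by exists k.+1; apply: le_lt_trans (inverse_orbit_step_le k.+1) psi_small.
Qed.

End InverseOrbit.

Theorem theorem4p9 (R : realType) (n : nat) (X : set (pt n))
  (kappa : pt n -> pt n -> Prop) (d : pt n -> pt n -> R)
  (T Tinv : pt n -> pt n) (alpha : pt n -> pt n -> R) (psi : R -> R) :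
  (0 < n)%N ->
  is_metric_on X d ->
  complete_on X d ->
  (finite_set X \/
   exists p : \bar R, (1 <= p)%E /\ forall x y, X x -> X y -> d x y = lp_dist p x y) ->
  (forall x, X x -> X (T x)) ->
  (forall x, X x -> X (Tinv x)) ->
  (forall x, X x -> T (Tinv x) = x) ->
  (forall x, X x -> Tinv (T x) = x) ->
  gen_alpha_psi_expansive X d T alpha psi ->
  alpha_admissible X alpha Tinv ->
  (exists x0, X x0 /\ 1 <= alpha x0 (Tinv x0)) ->
  exists x, X x /\ T x = x.
Proof.
move=> _ d_metric _ X_digital _ XTinv TinvK _ T_expansive Tinv_adm [x0 [Xx0 ax0]].
have d_ge0 : forall x y, X x -> X y -> 0 <= d x y by case: d_metric.
have X_discrete : uniformly_discrete X d.
  case: X_digital => [X_fin|[p [p_ge1 d_lp]]].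
  - exact: finite_metric_uniformly_discrete.
  - exact: lp_uniformly_discrete p_ge1 d_lp.
have [delta delta_gt0 close_eq] := X_discrete.
have [k step_small] := inverse_orbit_steps_small d_ge0 XTinv TinvK T_expansive
  Xx0 ax0 Tinv_adm delta_gt0.
have orbit_in := inverse_orbit_in XTinv Xx0.
have orbit_eq := close_eq _ _ (orbit_in k) (orbit_in k.+1) step_small.
exists (iter k Tinv x0); split; first exact: orbit_in.
by rewrite [in LHS]orbit_eq /= TinvK.
Qed.
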